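(* Let $f(x) = x^5 + a_4x^4 + a_3x^3 + a_2x^2 + a_1x + a_0$ be a real polynomial. Define $u_2 = \frac{3}{10}a_3 - \frac{3}{25}a_4^2$, $u_3 = \frac{2}{125}a_4^3 - \frac{3}{50}a_3a_4 + \frac{1}{10}a_2$, $u_4 = -\frac{3}{625}a_4^4 + \frac{3}{125}a_4^2a_3 - \frac{2}{25}a_4a_2 + \frac15 a_1$. If $u_3 = 0$, for $i_1,i_2 \in \{+1,-1\}$ let $x_{i_1,i_2} = i_1\sqrt{-u_2 + i_2\sqrt{u_2^2 - u_4}}$. If $u_3 \neq 0$, let $v_2 = -\frac{u_2^2}{3} - u_4$, $v_3 = \frac{2u_2u_4}{3} - \frac{2u_2^3}{27} - 2u_3^2$, let $C$ be a complex third root of $-v_3$ if $v_2 = 0$ and of $\frac12\left(-v_3 + \sqrt{v_3^2 + \frac{4}{27}v_2^3}\right)$ if $v_2 \neq 0$, let $y = C - \frac{v_2}{3C} - \frac{2u_2}{3}$, and let $x_{i_1,i_2} = \frac{i_1\sqrt{2y} + i_2\sqrt{-4u_2 - 2y - i_1\frac{8u_3}{\sqrt{2y}}}}{2}$. Then the four numbers $x_{i_1,i_2} - \frac{a_4}{5}$, $i_1,i_2 \in \{+1,-1\}$, are the four roots of $f'(x)$. Assume they are real, sort them as $\beta_4 \leq \beta_3 \leq \beta_2 \leq \beta_1$, let $F(x) = x^5 + a_4x^4 + a_3x^3 + a_2x^2 + a_1x$ (so $f = F + a_0$), and set $\lambda_1 = \max\{F(\beta_1),F(\beta_3)\}$,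 $\lambda_2 = \min\{F(\beta_2),F(\beta_4)\}$. Consider $(\dagger\dagger\dagger)$: $-\lambda_2 \leq a_0 \leq -\lambda_1$. Then: (1) all complex roots of $f(x)$ are real and non-negative if and only if all complex roots of $f'(x)$ are real and non-negative, $a_0 \leq 0$ and $(\dagger\dagger\dagger)$ holds; (2) all complex roots of $f(x)$ are real and positive if and only if all complex roots of $f'(x)$ are real and positive, $a_0 < 0$ and $(\dagger\dagger\dagger)$ holds.
   Context: Square roots and third roots appearing above denote arbitrary complex roots (the resulting set of four numbers $x_{i_1,i_2}$ does not depend on these choices). *)

From HB Require Import structures.
From mathcomp Require Import all_boot all_order all_algebra.
From mathcomp Require Import complex.
From mathcomp Require Import reals.
Set Implicit Arguments. Unset Strict Implicit. Unset Printing Implicit Defensive.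
Import Order.TTheory GRing.Theory Num.Theory.
Local Open Scope ring_scope.

Definition sgb {K : ringType} (b : bool) : K := if b then 1 else -1.

Definition quint {R : ringType} (a4 a3 a2 a1 a0 : R) : {poly R} :=
  'X^5 + a4 *: 'X^4 + a3 *: 'X^3 + a2 *: 'X^2 + a1 *: 'X + a0%:P.

Definition Fq {R : ringType} (a4 a3 a2 a1 : R) (x : R) : R :=
  x ^+ 5 + a4 * x ^+ 4 + a3 * x ^+ 3 + a2 * x ^+ 2 + a1 * x.

Section Aux.
Variable K : fieldType.
Variables a4 a3 a2 a1 : K.
Definition u2 : K := 3/10 * a3 - 3/25 * a4 ^+ 2.
Definition u3 : K := 2/125 * a4 ^+ 3 - 3/50 * a3 * a4 + 1/10 * a2.
Definition u4 : K := - (3/625) * a4 ^+ 4 + 3/125 * a4 ^+ 2 * a3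
                      - 2/25 * a4 * a2 + 1/5 * a1.
Definition v2 : K := - (u2 ^+ 2 / 3) - u4.
Definition v3 : K := 2 * u2 * u4 / 3 - 2 * u2 ^+ 3 / 27 - 2 * u3 ^+ 2.
(* the number whose cube root is taken, given a square root s of
   v3^2 + 4/27 v2^3 (only used when v2 != 0) *)
Definition cube_target (s : K) : K :=
  if v2 == 0 then - v3 else (- v3 + s) / 2.
Definition yres (C : K) : K := C - v2 / (3 * C) - 2 * u2 / 3.
End Aux.

Definition all_roots_real_nonneg (R : rcfType) (p : {poly R}) : Prop :=
  forall z : R[i], root (map_poly (real_complex R) p) z -> z \is Num.real /\ 0 <= z.
Definition all_roots_real_pos (R : rcfType) (p : {poly R}) : Prop :=
  forall z : R[i], root (map_poly (real_complex R) p) z -> z \is Num.real /\ 0 < z.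

(* Roots of f' by radicals: the substitution x = X - a4/5 turns f'/5 into the
   depressed quartic X^4 + 2 u2 X^2 + 4 u3 X + u4.  For u3 = 0 it is biquadratic;
   otherwise, for any root y of Ferrari's resolvent cubic (produced by Cardano's
   formula from the depressed cubic z^3 + v2 z + v3 with y = z - 2 u2 / 3), it
   is the difference of squares (X^2 + y + u2)^2 - 2y (X - u3/y)^2, whose two
   quadratic factors have the roots x_{i1,i2}.

   Sign conditions: if f = (X - r1)...(X - r5) with r1 <= ... <= r5, Rolle's theorem,
   with multiplicities counted, shows that f' = 5 (X - c1)...(X - c4) with
   r_i <= c_i <= r_(i+1), so the c_i are beta_4 <= ... <= beta_1 and the sign of
   f(beta_i) is read off the factorisation; nonnegative roots also give f(0) <= 0.
   Conversely, these alternating signs together with f(+oo) > 0 and f(0) <= 0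
   provide, by the intermediate value theorem, five roots interlacing the beta_i,
   and the same multiplicity count shows that they are all the roots of f. *)

From HB Require Import structures.
From mathcomp Require Import all_boot all_order all_algebra.
From mathcomp Require Import complex.
From mathcomp Require Import reals.
From mathcomp Require Import polyorder polyrcf.
From mathcomp Require Import ring lra.
Import Order.TTheory GRing.Theory Num.Theory.
Set Implicit Arguments.
Unset Strict Implicit.
Unset Printing Implicit Defensive.
Local Open Scope ring_scope.

(** * The roots of f' by radicals *)

Definition depressed_quartic {K : nzRingType} (U2 U3 U4 : K) : {poly K} :=
  'X^4 + (2 * U2)%:P * 'X^2 + (4 * U3)%:P * 'X + U4%:P.

Lemma deriv_quint_depressed (K : numFieldType) (a4 a3 a2 a1 a0 : K) :
  (quint a4 a3 a2 a1 a0)^`() = 5%:P *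
    (depressed_quartic (u2 a4 a3) (u3 a4 a3 a2) (u4 a4 a3 a2 a1) \Po ('X + (a4 / 5)%:P)).
Proof.
set a := a4 / 5.
have -> : forall U2 U3 U4 : K, 5%:P * (depressed_quartic U2 U3 U4 \Po ('X + a%:P)) =
    5%:P * 'X^4 + (5 * (4 * a))%:P * 'X^3 + (5 * (6 * a ^+ 2 + 2 * U2))%:P * 'X^2
    + (5 * (4 * a ^+ 3 + 4 * U2 * a + 4 * U3))%:P * 'X
    + (5 * (a ^+ 4 + 2 * U2 * a ^+ 2 + 4 * U3 * a + U4))%:P.
  by move=> U2 U3 U4; rewrite !comp_polyD !comp_polyM !comp_polyC !comp_polyX; ring.
have e3 : 5 * (4 * a) = 4 * a4 by rewrite /a; field.
have e2 : 5 * (6 * a ^+ 2 + 2 * u2 a4 a3) = 3 * a3 by rewrite /a /u2; field.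
have e1 : 5 * (4 * a ^+ 3 + 4 * u2 a4 a3 * a + 4 * u3 a4 a3 a2) = 2 * a2.
  by rewrite /a /u2 /u3; field.
have e0 : 5 * (a ^+ 4 + 2 * u2 a4 a3 * a ^+ 2 + 4 * u3 a4 a3 a2 * a + u4 a4 a3 a2 a1) = a1.
  by rewrite /a /u2 /u3 /u4; field.
rewrite e3 e2 e1 e0 /quint !derivE -!mul_polyC !polyCM; ring.
Qed.

Lemma prod_XsubC_comp_XaddC (K : comNzRingType) (I : Type) (r : seq I) (F : I -> K) (a : K) :
  (\prod_(i <- r) ('X - (F i)%:P)) \Po ('X + a%:P) = \prod_(i <- r) ('X - (F i - a)%:P).
Proof.
rewrite rmorph_prod; apply: eq_bigr => i _ /=.
by rewrite comp_polyB comp_polyX comp_polyC polyCB; ring.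
Qed.

Lemma depressed_quartic_biquadratic (K : comNzRingType) (U2 U4 s : K) (t : bool -> K) :
  s ^+ 2 = U2 ^+ 2 - U4 -> (forall i, t i ^+ 2 = - U2 + sgb i * s) ->
  depressed_quartic U2 0 U4 = \prod_(i1 : bool) \prod_(i2 : bool) ('X - (sgb i1 * t i2)%:P).
Proof.
move=> hs ht; rewrite !big_bool /=.
have -> : ('X - (sgb true * t true)%:P) * ('X - (sgb true * t false)%:P) *
    (('X - (sgb false * t true)%:P) * ('X - (sgb false * t false)%:P)) =
    ('X^2 - (t true ^+ 2)%:P) * ('X^2 - (t false ^+ 2)%:P) by rewrite /sgb; ring.
have -> : U4 = U2 ^+ 2 - s ^+ 2 by rewrite hs; ring.
by rewrite /depressed_quartic !ht /sgb; ring.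
Qed.

Definition ferrari_resolvent {K : nzRingType} (U2 U3 U4 y : K) : K :=
  y ^+ 3 + 2 * U2 * y ^+ 2 + (U2 ^+ 2 - U4) * y - 2 * U3 ^+ 2.

Lemma depressed_quartic_ferrari (K : numFieldType) (U2 U3 U4 y w : K) (r : bool -> K) :
  U3 != 0 -> ferrari_resolvent U2 U3 U4 y = 0 -> w ^+ 2 = 2 * y ->
  (forall i, r i ^+ 2 = - 4 * U2 - 2 * y - sgb i * (8 * U3 / w)) ->
  depressed_quartic U2 U3 U4 =
    \prod_(i1 : bool) \prod_(i2 : bool) ('X - ((sgb i1 * w + sgb i2 * r i1) / 2)%:P).
Proof.
move=> U3_neq0 hy hw hr.
have y_neq0 : y != 0.
  apply: contra U3_neq0 => /eqP y0.
  have : - (2 * U3 ^+ 2) = 0 by rewrite -hy y0 /ferrari_resolvent; ring.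
  by move/eqP; rewrite oppr_eq0 mulf_eq0 pnatr_eq0 expf_eq0.
have w_neq0 : w != 0.
  apply: contra y_neq0 => /eqP w0.
  by move: hw; rewrite w0 expr0n /= => /esym/eqP; rewrite mulf_eq0 pnatr_eq0.
set P := y + U2; set Q := 2 * U3 / w.
have hPQ : P ^+ 2 - Q ^+ 2 = U4.
  apply/eqP; rewrite -subr_eq0.
  have -> : P ^+ 2 - Q ^+ 2 - U4 = ferrari_resolvent U2 U3 U4 y / y.
    by rewrite /P /Q expr_div_n hw /ferrari_resolvent; field.
  by rewrite hy mul0r.
rewrite !big_bool /=.
have -> : ('X - ((sgb true * w + sgb true * r true) / 2)%:P) *
    ('X - ((sgb true * w + sgb false * r true) / 2)%:P) *
    (('X - ((sgb false * w + sgb true * r false) / 2)%:P) *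
     ('X - ((sgb false * w + sgb false * r false) / 2)%:P)) =
    ('X^2 - (2 * (w / 2))%:P * 'X + ((w / 2) ^+ 2 - (r true / 2) ^+ 2)%:P) *
    ('X^2 + (2 * (w / 2))%:P * 'X + ((w / 2) ^+ 2 - (r false / 2) ^+ 2)%:P).
  by rewrite /sgb; ring.
have -> : 2 * (w / 2) = w by field.
have -> : (w / 2) ^+ 2 - (r true / 2) ^+ 2 = P + Q by rewrite !expr_div_n hw hr /P /Q /sgb; field.
have -> : (w / 2) ^+ 2 - (r false / 2) ^+ 2 = P - Q by rewrite !expr_div_n hw hr /P /Q /sgb; field.
have e2 : 2 * U2 = 2 * P - w ^+ 2 by rewrite hw /P; ring.
have e3 : 4 * U3 = 2 * w * Q by rewrite /Q; field.
by rewrite /depressed_quartic e2 e3 -hPQ; ring.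
Qed.

Lemma cardano (K : numFieldType) (p q s C : K) :
  s ^+ 2 = q ^+ 2 + 4 / 27 * p ^+ 3 ->
  C ^+ 3 = (if p == 0 then - q else (- q + s) / 2) ->
  let z := C - p / (3 * C) in z ^+ 3 + p * z + q = 0.
Proof.
move=> hs hC z; have [p0 | p_neq0] := eqVneq p 0.
  by rewrite /z p0 mul0r subr0 mul0r addr0 hC p0 eqxx addNr.
have C_neq0 : C != 0.
  apply/eqP => C0; move: hC; rewrite (negPf p_neq0) C0 expr0n /= => /esym/eqP.
  rewrite mulf_eq0 invr_eq0 pnatr_eq0 orbF addrC subr_eq0 => /eqP sq.
  have : 4 / 27 * p ^+ 3 = 0 by rewrite -[LHS](addKr (q ^+ 2)) addrC -hs -sq subrr.
  by move/eqP; rewrite mulf_eq0 expf_eq0 (negPf p_neq0) andbF orbF mulf_eq0 invr_eq0 !pnatr_eq0.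
have -> : z ^+ 3 + p * z + q = ((C ^+ 3) ^+ 2 + q * C ^+ 3 - p ^+ 3 / 27) / C ^+ 3.
  by rewrite /z; field.
rewrite hC (negPf p_neq0).
have -> : ((- q + s) / 2) ^+ 2 + q * ((- q + s) / 2) - p ^+ 3 / 27 =
  (s ^+ 2 - (q ^+ 2 + 4 / 27 * p ^+ 3)) / 4 by field.
by rewrite hs subrr !mul0r.
Qed.

Lemma ferrari_resolvent_yres (K : numFieldType) (a4 a3 a2 a1 s C : K) :
  s ^+ 2 = v3 a4 a3 a2 a1 ^+ 2 + 4 / 27 * v2 a4 a3 a2 a1 ^+ 3 ->
  C ^+ 3 = cube_target a4 a3 a2 a1 s ->
  ferrari_resolvent (u2 a4 a3) (u3 a4 a3 a2) (u4 a4 a3 a2 a1) (yres a4 a3 a2 a1 C) = 0.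
Proof.
move=> hs hC; have /= <- := cardano hs hC.
rewrite /yres; move: (C - _ / _) => z.
by rewrite /ferrari_resolvent /v2 /v3; field.
Qed.

Lemma map_quint (K L : nzRingType) (f : {rmorphism K -> L}) (a4 a3 a2 a1 a0 : K) :
  map_poly f (quint a4 a3 a2 a1 a0) = quint (f a4) (f a3) (f a2) (f a1) (f a0).
Proof. by rewrite /quint !rmorphD /= !map_polyZ !map_polyXn map_polyX map_polyC. Qed.

Lemma u3_fmorph (K L : fieldType) (f : {rmorphism K -> L}) (a4 a3 a2 : K) :
  u3 (f a4) (f a3) (f a2) = f (u3 a4 a3 a2).
Proof.
by rewrite /u3 !(rmorphD, rmorphN, rmorphM, rmorphXn, fmorphV, rmorph_nat, rmorph1); ring.
Qed.

Lemma quint_monic (K : nzRingType) (a4 a3 a2 a1 a0 : K) : quint a4 a3 a2 a1 a0 \is monic.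
Proof.
have size_lt (p q : {poly K}) :
    (size p < 6)%N -> (size q < 6)%N -> (size (p + q)%R < 6)%N.
  by move=> hp hq; rewrite (leq_ltn_trans (size_add _ _)) // gtn_max hp.
have size_monomial (c : K) k : (k < 5)%N -> (size (c *: 'X^k) < 6)%N.
  by move=> hk; rewrite (leq_ltn_trans (size_scale_leq _ _)) // size_polyXn.
rewrite /quint -!addrA monicE lead_coefDl ?lead_coefXn // size_polyXn.
rewrite -[a1 *: 'X]/(a1 *: 'X^1).
do 4 (apply: (size_lt); first exact: (size_monomial)).
exact: leq_ltn_trans (size_polyC_leq1 _) _.
Qed.

Lemma horner_quint (K : comNzRingType) (a4 a3 a2 a1 a0 x : K) :
  (quint a4 a3 a2 a1 a0).[x] = Fq a4 a3 a2 a1 x + a0.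
Proof. by rewrite /quint /Fq !hornerE. Qed.

Section RealClosedField.

Variable R : rcfType.
Implicit Types (p : {poly R}) (rs cs : seq R).

(** * Multiplicities and interlacing of the roots of p and p' *)

Lemma mu_mup p x : \mu_x p = mup x p.
Proof.
have [->|p_neq0] := eqVneq p 0.
  by rewrite mu0 /mup; case: arg_maxnP => //= -[[|i]] //; rewrite size_poly0.
by apply/eqP; rewrite eqn_leq mup_geq // root_mu /= -root_le_mu // -mup_geq.
Qed.

Lemma mup_deriv_root p x : p != 0 -> root p x -> mup x p = (mup x p^`()).+1.
Proof. by move=> p_neq0 px; rewrite -!mu_mup mu_deriv_root // addn1. Qed.

Lemma prod_XsubC_dvdp p (s : seq R) :
  p != 0 -> (forall y, count_mem y s <= mup y p)%N -> \prod_(x <- s) ('X - x%:P) %| p.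
Proof.
elim: s p => [|x s IH] p p_neq0 hs; first by rewrite big_nil dvd1p.
have px : root p x.
  by rewrite -dvdp_XsubCl XsubC_dvd // (leq_trans _ (hs x)) //= eqxx.
have := divpK (d := 'X - x%:P) (p := p); rewrite dvdp_XsubCl px => /(_ isT) Ep.
set q := p %/ _ in Ep.
have q_neq0 : q != 0 by apply: contra p_neq0; rewrite -Ep => /eqP->; rewrite mul0r.
rewrite big_cons -Ep mulrC dvdp_mul2r ?polyXsubC_eq0 //; apply: IH => // y.
have := hs y; rewrite -Ep mupM ?polyXsubC_eq0 // (mup_XsubCX 1) /=.
by case: (x == y); rewrite ?add1n ?addn1 ?add0n ?addn0.
Qed.

Lemma prod_XsubC_dvdp_eq p (s : seq R) : size p = (size s).+1 ->
  \prod_(x <- s) ('X - x%:P) %| p -> p = lead_coef p *: \prod_(x <- s) ('X - x%:P).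
Proof.
move=> p_size dvd; have /eqpfP {1}-> : p %= \prod_(x <- s) ('X - x%:P).
  by rewrite eqp_sym -dvdp_size_eqp // size_prod_XsubC p_size.
by rewrite lead_coef_prod_XsubC divr1.
Qed.

Lemma lead_coef_deriv p : lead_coef p^`() = lead_coef p *+ (size p).-1.
Proof.
rewrite !lead_coefE size_deriv coef_deriv.
by case E: (size p) => [|[|n]] //=; rewrite mulr0n nth_default ?E.
Qed.

Fixpoint interlaced_from (r : R) rs cs : Prop :=
  match rs, cs with
  | [::], [::] => True
  | r' :: rs', c :: cs' => r <= c <= r' /\ interlaced_from r' rs' cs'
  | _, _ => False
  end.

(* A tie r = c = r' stands for a multiple root, an entry r < c < r' for a Rolle
   point between two distinct consecutive roots. *)
Fixpoint rolle_interlaced_from (r : R) rs cs : Prop :=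
  match rs, cs with
  | [::], [::] => True
  | r' :: rs', c :: cs' => (r = c /\ r' = c \/ r < c < r') /\ rolle_interlaced_from r' rs' cs'
  | _, _ => False
  end.

Definition interlaced rs cs := if rs is r :: rs' then interlaced_from r rs' cs else False.

Definition rolle_interlaced rs cs :=
  if rs is r :: rs' then rolle_interlaced_from r rs' cs else False.

Lemma rolle_interlaced_fromW r rs cs :
  rolle_interlaced_from r rs cs -> interlaced_from r rs cs.
Proof.
elim: rs cs r => [|r' rs IH] [|c cs] r //= [hc /IH hrs].
by split=> //; case: hc => [[-> ->]|/andP[/ltW -> /ltW ->]]; rewrite ?lexx.
Qed.

Lemma interlaced_size rs cs : interlaced rs cs -> size rs = (size cs).+1.
Proof.
by case: rs => // r rs; elim: rs cs r => [|r' rs IH] [|c cs] r //= [_ /IH [->]].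
Qed.

Lemma interlaced_from_notin r rs cs y :
  interlaced_from r rs cs -> y < r -> y \notin r :: rs ++ cs.
Proof.
elim: rs cs r => [|r' rs IH] [|c cs] r //=; first by move=> _ yr; rewrite inE (lt_eqF yr).
move=> [/andP[rc cr'] /IH hrs] yr; have := hrs (lt_le_trans yr (le_trans rc cr')).
rewrite !(inE, mem_cat) (lt_eqF yr) (lt_eqF (lt_le_trans yr rc)) /=.
by case: (y == _); case: (y \in rs); case: (y \in cs).
Qed.

Lemma count_mem_interlaced rs cs y : interlaced rs cs ->
  (count_mem y rs <= (count_mem y cs).+1)%N.
Proof.
case: rs => // r rs; elim: rs cs r => [|r' rs IH] [|c cs] r //=; first by case: (r == y).
move=> [/andP[rc cr'] hrs]; have := IH _ _ hrs; rewrite /=.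
have [<-|ry] := eqVneq r y; last by rewrite add0n => /leq_trans; apply; rewrite ltnS leq_addl.
have [r'r|r'_neq] := eqVneq r' r.
  have -> : c == r by rewrite eq_le rc -r'r cr'.
  by rewrite add1n ltnS.
have : r < r' by rewrite lt_def r'_neq (le_trans rc cr').
move=> /(interlaced_from_notin hrs).
by rewrite inE mem_cat !negb_or => /and3P[_ /count_memPn ->].
Qed.

(* A value occurring in rs occurs fewer times in cs; any other value occurs in cs
   at most once. *)
Lemma count_mem_rolle_interlaced rs cs y : rolle_interlaced rs cs ->
  (count_mem y cs + (y \in rs) <= count_mem y rs + (y \notin rs))%N.
Proof.
case: rs => // r rs; elim: rs cs r => [|r' rs IH] [|c cs] r //.
  by rewrite /= inE eq_sym; case: (r == y).
move=> [hc hrs]; have := IH _ _ hrs.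
rewrite [count_mem y (c :: _)]/= [count_mem y (r :: _)]/=.
case: hc => [[<- <-]|/andP[rc cr']].
  have -> : (y \in [:: r', r' & rs]) = (y \in r' :: rs) by rewrite !inE orbA orbb.
  by rewrite -!addnA leq_add2l addnA.
have [r'y|yr'] := leP r' y.
  have cy : c < y := lt_le_trans cr' r'y.
  have ry : r < y := lt_trans rc cy.
  have -> : (y \in [:: r, r' & rs]) = (y \in r' :: rs) by rewrite in_cons gt_eqF.
  by rewrite (lt_eqF cy) (lt_eqF ry).
have /and3P[y_neq_r' y_notin_rs y_notin_cs] : [&& y != r', y \notin rs & y \notin cs].
  have := interlaced_from_notin (rolle_interlaced_fromW hrs) yr'.
  by rewrite in_cons mem_cat !negb_or.
have -> : (y \in [:: r, r' & rs]) = (y == r).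
  by rewrite !in_cons (negPf y_neq_r') (negPf y_notin_rs) !orbF.
rewrite /= (count_memPn y_notin_rs) (count_memPn y_notin_cs) [r' == y]eq_sym (negPf y_neq_r').
by have [->|] := eqVneq y r; rewrite ?(gt_eqF rc) ?eqxx //=; case: (c == y).
Qed.

Lemma rolle_interlaced_roots p r rs : sorted <=%R (r :: rs) -> all (root p) (r :: rs) ->
  exists2 cs, rolle_interlaced (r :: rs) cs & all (fun c => root p c || root p^`() c) cs.
Proof.
elim: rs r => [|r' rs IH] r /=; first by exists [::].
move=> /andP[rr' srt] /andP[pr prs]; have [cs hcs hroots] := IH r' srt prs.
have pr' : root p r' by case/andP: prs.
have [req|r_neq] := eqVneq r r'.
  by exists (r :: cs) => /=; [rewrite req; split=> //; left | rewrite pr].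
have lt_rr' : r < r' by rewrite lt_neqAle r_neq rr'.
have [c] := poly_rolle lt_rr' (etrans (eqP pr) (esym (eqP pr'))).
rewrite in_itv /= => /andP[rc cr'] p'c.
by exists (c :: cs) => /=; [split=> //; right; rewrite rc | rewrite /root p'c eqxx orbT].
Qed.

Lemma deriv_prod_XsubC_interlaced r rs : sorted <=%R (r :: rs) ->
  exists2 cs, interlaced (r :: rs) cs &
    (\prod_(x <- r :: rs) ('X - x%:P))^`() = (size rs).+1%:R *: \prod_(c <- cs) ('X - c%:P).
Proof.
set p := \prod_(x <- _) _ => srt.
have p_neq0 : p != 0 by rewrite monic_neq0 ?monic_prod_XsubC.
have [cs hcs hroots] : exists2 cs, rolle_interlaced (r :: rs) cs &
    all (fun c => root p c || root p^`() c) cs.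
  by apply: rolle_interlaced_roots srt _; apply/allP => x; rewrite root_prod_XsubC.
have p'_size : size p^`() = (size rs).+1 by rewrite size_deriv size_prod_XsubC.
have p'_neq0 : p^`() != 0 by rewrite -size_poly_gt0 p'_size.
have interl : interlaced (r :: rs) cs := rolle_interlaced_fromW hcs.
exists cs => //.
have dvd : \prod_(c <- cs) ('X - c%:P) %| p^`().
  apply: (prod_XsubC_dvdp p'_neq0) => y; have := count_mem_rolle_interlaced y hcs.
  have [y_rs|y_notin] := boolP (y \in r :: rs).
    have py : root p y by rewrite root_prod_XsubC.
    by rewrite -(mu_prod_XsubC y (r :: rs)) -/p (mup_deriv_root p_neq0 py) addn0 addn1.
  rewrite (count_memPn y_notin) addn0; have [y_cs|/count_memPn-> //] := boolP (y \in cs).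
  move=> /leq_trans; apply; rewrite add0n -mu_mup mu_gt0 //.
  by have /orP[|//] := allP hroots y y_cs; rewrite root_prod_XsubC (negPf y_notin).
rewrite (prod_XsubC_dvdp_eq _ dvd); last by rewrite p'_size -(interlaced_size interl).
by rewrite lead_coef_deriv lead_coef_prod_XsubC size_prod_XsubC.
Qed.

Lemma interlaced_from_path r rs cs : interlaced_from r rs cs -> path <=%R r cs.
Proof.
elim: rs cs r => [|r' rs IH] [|c cs] r //= [/andP[rc cr'] /IH r'cs].
by rewrite rc (path_le le_trans cr').
Qed.

Lemma deriv_prod_XsubC_interlacedE rs bs (c : R) : c != 0 ->
  sorted <=%R rs -> sorted <=%R bs ->
  (\prod_(x <- rs) ('X - x%:P))^`() = c *: \prod_(b <- bs) ('X - b%:P) -> interlaced rs bs.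
Proof.
case: rs => [|r rs] c_neq0 srt bs_sorted p'E.
  move/esym/eqP: p'E; rewrite big_nil derivC scaler_eq0 (negPf c_neq0).
  by rewrite -lead_coef_eq0 lead_coef_prod_XsubC oner_eq0.
have [cs interl] := deriv_prod_XsubC_interlaced srt.
rewrite p'E => E; have lcE := congr1 lead_coef E.
rewrite !lead_coefZ !lead_coef_prod_XsubC !mulr1 in lcE.
move: E; rewrite -lcE => /(scalerI c_neq0)/prod_XsubC_eq perm_bs.
suff -> : bs = cs by [].
apply: (sorted_eq le_trans le_anti) => //.
exact: path_sorted (interlaced_from_path interl).
Qed.

Lemma interlaced_roots_prod_XsubC p rs bs (c : R) :
  p \is monic -> c != 0 -> p^`() = c *: \prod_(b <- bs) ('X - b%:P) ->
  interlaced rs bs -> all (root p) rs -> p = \prod_(r <- rs) ('X - r%:P).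
Proof.
move=> p_monic c_neq0 p'E interl roots; have p_neq0 := monic_neq0 p_monic.
have p_size : size p = (size rs).+1.
  have <- : (size p).-1 = size rs.
    by rewrite -size_deriv p'E size_scale // size_prod_XsubC (interlaced_size interl).
  by rewrite prednK // size_poly_gt0.
rewrite {1}(prod_XsubC_dvdp_eq p_size) ?(monicP p_monic) ?scale1r //.
apply: (prod_XsubC_dvdp p_neq0) => y; have [py|py] := boolP (root p y).
  rewrite (mup_deriv_root p_neq0 py) p'E -mu_mup mu_mulC // mu_mup mu_prod_XsubC.
  exact: count_mem_interlaced.
by rewrite (count_memPn _) //; apply: contra py => /(allP roots).
Qed.

Lemma horner_prod_XsubC_sign (ls gs : seq R) x : all (<= x) ls -> all (>= x) gs ->
  0 <= (-1) ^+ size gs * (\prod_(r <- ls ++ gs) ('X - r%:P)).[x].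
Proof.
move=> /allP ls_le /allP gs_ge; rewrite big_cat hornerM !horner_prod mulrCA.
have -> : (-1) ^+ size gs * \prod_(g <- gs) ('X - g%:P).[x] = \prod_(g <- gs) (g - x).
  elim: gs {gs_ge} => [|g gs IH]; first by rewrite !big_nil mulr1.
  by rewrite !big_cons /= exprS hornerXsubC -IH; ring.
rewrite !big_seq; apply: mulr_ge0; apply: prodr_ge0 => r.
  by move=> /ls_le; rewrite hornerXsubC subr_ge0.
by move=> /gs_ge; rewrite subr_ge0.
Qed.

(** * Real nonnegative roots and the quintic *)

Local Notation toC := (real_complex R).

Lemma root_map_scale_prod_XsubC (c : R) (s : seq R) z : c != 0 ->
  root (map_poly toC (c *: \prod_(x <- s) ('X - x%:P))) z = (z \in map toC s).
Proof.
move=> c_neq0; rewrite map_polyZ map_prod_XsubC -(big_map _ xpredT (fun z => 'X - z%:P)).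
by rewrite rootZ ?root_prod_XsubC ?fmorph_eq0.
Qed.

Lemma all_roots_real_nonneg_scale_prod (c : R) (s : seq R) : c != 0 ->
  all_roots_real_nonneg (c *: \prod_(x <- s) ('X - x%:P)) <-> all (>= 0) s.
Proof.
move=> c_neq0; split=> [roots | /allP s_ge0 z].
  apply/allP => x xs; have := roots x%:C%C.
  by rewrite root_map_scale_prod_XsubC // map_f // ler0c => /(_ isT)[].
rewrite root_map_scale_prod_XsubC // => /mapP[x /s_ge0 x_ge0 ->].
have x_ge0' : 0 <= x%:C%C :> R[i] by rewrite ler0c.
by split=> //; apply: ger0_real.
Qed.

Lemma all_roots_real_pos_scale_prod (c : R) (s : seq R) : c != 0 ->
  all_roots_real_pos (c *: \prod_(x <- s) ('X - x%:P)) <-> all (> 0) s.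
Proof.
move=> c_neq0; split=> [roots | /allP s_gt0 z].
  apply/allP => x xs; have := roots x%:C%C.
  by rewrite root_map_scale_prod_XsubC // map_f // ltcR => /(_ isT)[].
rewrite root_map_scale_prod_XsubC // => /mapP[x /s_gt0 x_gt0 ->].
have x_gt0' : 0 < x%:C%C :> R[i] by rewrite ltcR.
by split=> //; apply: gtr0_real.
Qed.

Lemma all_roots_real_nonneg_sorted (c b : R) (s : seq R) : c != 0 -> sorted <=%R (b :: s) ->
  all_roots_real_nonneg (c *: \prod_(x <- b :: s) ('X - x%:P)) <-> 0 <= b.
Proof.
move=> c_neq0 /(order_path_min le_trans) s_ge_b.
rewrite all_roots_real_nonneg_scale_prod //=; split=> [/andP[] // | b_ge0].
by rewrite b_ge0; apply: sub_all s_ge_b => x; apply: le_trans.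
Qed.

Lemma all_roots_real_pos_sorted (c b : R) (s : seq R) : c != 0 -> sorted <=%R (b :: s) ->
  all_roots_real_pos (c *: \prod_(x <- b :: s) ('X - x%:P)) <-> 0 < b.
Proof.
move=> c_neq0 /(order_path_min le_trans) s_ge_b.
rewrite all_roots_real_pos_scale_prod //=; split=> [/andP[] // | b_gt0].
by rewrite b_gt0; apply: sub_all s_ge_b => x; apply: lt_le_trans.
Qed.

Lemma all_roots_real_nonneg_monicP p : p \is monic ->
  all_roots_real_nonneg p <-> exists2 rs, p = \prod_(r <- rs) ('X - r%:P) & all (>= 0) rs.
Proof.
move=> p_monic; split=> [roots | [rs -> rs_ge0]]; last first.
  by rewrite -[\prod_(r <- rs) _]scale1r all_roots_real_nonneg_scale_prod ?oner_eq0.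
have [zs pE] := closed_field_poly_normal (map_poly toC p).
rewrite lead_coef_map (monicP p_monic) rmorph1 scale1r in pE.
have zs_real z : z \in zs -> z = (complex.Re z)%:C%C /\ 0 <= complex.Re z.
  move=> zs_z; have /roots[_] : root (map_poly toC p) z by rewrite pE root_prod_XsubC.
  by case: z {zs_z} => a b; rewrite lecE /= => /andP[/eqP-> ->].
exists (map (@complex.Re R) zs); last by apply/allP => _ /mapP[z /zs_real[_ ?] ->].
apply: (@map_poly_inj _ _ toC); rewrite pE map_prod_XsubC big_map.
by apply: eq_big_seq => z /zs_real[-> _].
Qed.

Lemma all_roots_real_posE p :
  all_roots_real_pos p <-> all_roots_real_nonneg p /\ ~~ root p 0.
Proof.
have root0 : root (map_poly toC p) 0 = root p 0 by rewrite -(rmorph0 toC) fmorph_root.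
split=> [roots | [roots p0] z pz].
  split=> [z /roots[z_real /ltW z_ge0] // |].
  by apply/negP; rewrite -root0 => /roots[_]; rewrite ltxx.
have [z_real z_ge0] := roots z pz; split=> //; rewrite lt_def z_ge0 andbT.
by apply: contraNneq p0 => z0; rewrite -root0 -z0.
Qed.

(* Condition (+++): -lam2 <= a0 <= -lam1 with f = F + a0. *)
Definition alternating_signs p (b1 b2 b3 b4 : R) : Prop :=
  [/\ p.[b1] <= 0, 0 <= p.[b2], p.[b3] <= 0 & 0 <= p.[b4]].

Lemma alternating_signs_of_nonneg_roots (rs : seq R) (b1 b2 b3 b4 : R) :
  let p := \prod_(r <- rs) ('X - r%:P) in
  b4 <= b3 -> b3 <= b2 -> b2 <= b1 ->
  all (>= 0) rs -> p^`() = 5 *: \prod_(b <- [:: b4; b3; b2; b1]) ('X - b%:P) ->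
  [/\ 0 <= b4, p.[0] <= 0 & alternating_signs p b1 b2 b3 b4].
Proof.
move=> p b43 b32 b21 rs_ge0 p'E.
have pE : p = \prod_(r <- sort <=%R rs) ('X - r%:P).
  by apply/perm_big; rewrite perm_sym perm_sort.
have interl : interlaced (sort <=%R rs) [:: b4; b3; b2; b1].
  apply: (@deriv_prod_XsubC_interlacedE _ _ 5); last by rewrite -pE.
  - by rewrite pnatr_eq0.
  - by apply: sort_sorted; exact: le_total.
  - by rewrite /= b43 b32 b21.
have xs_ge0 : all (>= 0) (sort <=%R rs) by rewrite all_sort.
have xs_size := interlaced_size interl; move: xs_size interl xs_ge0 pE.
case: (sort <=%R rs) => [|x1 [|x2 [|x3 [|x4 [|x5 []]]]]] // _.
move=> [/andP[x1b4 b4x2] [/andP[x2b3 b3x3] [/andP[x3b2 b2x4] [/andP[x4b1 b1x5] _]]]] xs_ge0 pE.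
have x1_ge0 : 0 <= x1 by case/andP: xs_ge0.
have sign ls gs x : ls ++ gs = [:: x1; x2; x3; x4; x5] ->
    all (<= x) ls -> all (>= x) gs -> if odd (size gs) then p.[x] <= 0 else 0 <= p.[x].
  move=> lsgs ls_le gs_ge; have := horner_prod_XsubC_sign ls_le gs_ge.
  by rewrite lsgs -pE -signr_odd; case: (odd _); rewrite ?mul1r ?mulN1r ?oppr_ge0.
split; first exact: le_trans x1b4.
  by apply: (sign [::] [:: x1; x2; x3; x4; x5]) => //=; repeat (apply/andP; split) => //; lra.
split.
- by apply: (sign [:: x1; x2; x3; x4] [:: x5]) => //=; repeat (apply/andP; split) => //; lra.
- by apply: (sign [:: x1; x2; x3] [:: x4; x5]) => //=; repeat (apply/andP; split) => //; lra.
- by apply: (sign [:: x1; x2] [:: x3; x4; x5]) => //=; repeat (apply/andP; split) => //; lra.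
- by apply: (sign [:: x1] [:: x2; x3; x4; x5]) => //=; repeat (apply/andP; split) => //; lra.
Qed.

Lemma nonneg_roots_of_alternating_signs p (b1 b2 b3 b4 : R) :
  b4 <= b3 -> b3 <= b2 -> b2 <= b1 ->
  p \is monic -> p^`() = 5 *: \prod_(b <- [:: b4; b3; b2; b1]) ('X - b%:P) ->
  0 <= b4 -> p.[0] <= 0 -> alternating_signs p b1 b2 b3 b4 ->
  exists2 rs, p = \prod_(r <- rs) ('X - r%:P) & all (>= 0) rs.
Proof.
move=> b43 b32 b21 p_monic p'E b4_ge0 p0 [pb1 pb2 pb3 pb4].
have ivt a b : a <= b -> p.[a] * p.[b] <= 0 -> exists2 x, a <= x <= b & root p x.
  by move=> ab /(polyrcf.poly_ivt ab)[x]; rewrite in_itv /=; exists x.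
have [M b1M pM] : exists2 M, b1 <= M & 0 <= p.[M].
  have lc_gt0 : 0 < lead_coef p by rewrite (monicP p_monic) ltr01.
  have [n hn] := poly_pinfty_gt_lc lc_gt0.
  exists (Num.max b1 n); first by rewrite le_max lexx.
  by apply: le_trans (hn _ _); rewrite ?(monicP p_monic) ?ler01 // le_max lexx orbT.
have [x5 /andP[b1x5 _] px5] := ivt _ _ b1M (mulr_le0_ge0 pb1 pM).
have [x4 /andP[b2x4 x4b1] px4] := ivt _ _ b21 (mulr_ge0_le0 pb2 pb1).
have [x3 /andP[b3x3 x3b2] px3] := ivt _ _ b32 (mulr_le0_ge0 pb3 pb2).
have [x2 /andP[b4x2 x2b3] px2] := ivt _ _ b43 (mulr_ge0_le0 pb4 pb3).
have [x1 /andP[x1_ge0 x1b4] px1] := ivt _ _ b4_ge0 (mulr_le0_ge0 p0 pb4).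
exists [:: x1; x2; x3; x4; x5]; last by rewrite /=; repeat (apply/andP; split) => //; lra.
apply: (interlaced_roots_prod_XsubC p_monic _ p'E); first by rewrite pnatr_eq0.
  by rewrite /= x1b4 b4x2 x2b3 b3x3 x3b2 b2x4 x4b1 b1x5.
by rewrite /= px1 px2 px3 px4 px5.
Qed.

Lemma quintic_real_nonneg_rootsP p (b1 b2 b3 b4 : R) :
  b4 <= b3 -> b3 <= b2 -> b2 <= b1 ->
  p \is monic -> p^`() = 5 *: \prod_(b <- [:: b4; b3; b2; b1]) ('X - b%:P) ->
  all_roots_real_nonneg p <->
    [/\ all_roots_real_nonneg p^`(), p.[0] <= 0 & alternating_signs p b1 b2 b3 b4].
Proof.
move=> b43 b32 b21 p_monic p'E.
have deriv_nonneg : all_roots_real_nonneg p^`() <-> 0 <= b4.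
  by rewrite p'E all_roots_real_nonneg_sorted ?pnatr_eq0 //= b43 b32 b21.
rewrite all_roots_real_nonneg_monicP //.
split=> [[rs pE rs_ge0] | [p'_nonneg p0 signs]].
  have := alternating_signs_of_nonneg_roots b43 b32 b21 rs_ge0.
  by rewrite -pE => /(_ p'E)[/deriv_nonneg.2 p'_nonneg p0 signs].
exact: nonneg_roots_of_alternating_signs (deriv_nonneg.1 p'_nonneg) p0 signs.
Qed.

Lemma quintic_real_pos_rootsP p (b1 b2 b3 b4 : R) :
  b4 <= b3 -> b3 <= b2 -> b2 <= b1 ->
  p \is monic -> p^`() = 5 *: \prod_(b <- [:: b4; b3; b2; b1]) ('X - b%:P) ->
  all_roots_real_pos p <->
    [/\ all_roots_real_pos p^`(), p.[0] < 0 & alternating_signs p b1 b2 b3 b4].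
Proof.
move=> b43 b32 b21 p_monic p'E.
have nonnegP := quintic_real_nonneg_rootsP b43 b32 b21 p_monic p'E.
have sorted_bs : sorted <=%R [:: b4; b3; b2; b1] by rewrite /= b43 b32 b21.
have five_neq0 : (5 : R) != 0 by rewrite pnatr_eq0.
have := all_roots_real_nonneg_sorted five_neq0 sorted_bs; rewrite -p'E => deriv_nonneg.
have := all_roots_real_pos_sorted five_neq0 sorted_bs; rewrite -p'E => deriv_pos.
rewrite all_roots_real_posE /root; split.
  move=> [/nonnegP[/deriv_nonneg b4_ge0 p0 signs] p0_neq0].
  have p0_lt0 : p.[0] < 0 by rewrite lt_neqAle p0_neq0 p0.
  split=> //; apply/deriv_pos; rewrite lt_neqAle b4_ge0 andbT.
  by case: signs => _ _ _; apply: contraTneq => <-; rewrite -ltNge.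
move=> [/deriv_pos b4_gt0 p0_lt0 signs]; rewrite (lt_eqF p0_lt0); split=> //.
by apply/nonnegP; split=> //; [apply/deriv_nonneg/ltW | apply/ltW].
Qed.

End RealClosedField.

Theorem proposition3p6 (R : realType) (a4 a3 a2 a1 a0 : R) :
  let f := quint a4 a3 a2 a1 a0 in
  let A4 := (a4%:C)%C in let A3 := (a3%:C)%C in let A2 := (a2%:C)%C in let A1 := (a1%:C)%C in
  let fC' := map_poly (real_complex R) (deriv f) in
  (* case u3 = 0: any choice of square roots s, t *)
  (u3 a4 a3 a2 = 0 ->
   forall (s : R[i]) (t : bool -> R[i]),
     s ^+ 2 = u2 A4 A3 ^+ 2 - u4 A4 A3 A2 A1 ->
     (forall i2, t i2 ^+ 2 = - u2 A4 A3 + sgb i2 * s) ->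
     fC' = 5%:P * \prod_(i1 : bool) \prod_(i2 : bool)
                    ('X - (sgb i1 * t i2 - A4 / 5)%:P)) /\
  (* case u3 <> 0: any choice of square/cube roots s, C, w, r *)
  (u3 a4 a3 a2 != 0 ->
   forall (s C w : R[i]) (r : bool -> R[i]),
     s ^+ 2 = v3 A4 A3 A2 A1 ^+ 2 + 4/27 * v2 A4 A3 A2 A1 ^+ 3 ->
     C ^+ 3 = cube_target A4 A3 A2 A1 s ->
     w ^+ 2 = 2 * yres A4 A3 A2 A1 C ->
     (forall i1, r i1 ^+ 2 = - 4 * u2 A4 A3 - 2 * yres A4 A3 A2 A1 C
                              - sgb i1 * (8 * u3 A4 A3 A2 / w)) ->
     fC' = 5%:P * \prod_(i1 : bool) \prod_(i2 : bool)
                    ('X - ((sgb i1 * w + sgb i2 * r i1) / 2 - A4 / 5)%:P)) /\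
  (* the roots of f' being real, sorted b4 <= b3 <= b2 <= b1 *)
  (forall b1 b2 b3 b4 : R,
     b4 <= b3 -> b3 <= b2 -> b2 <= b1 ->
     deriv f = 5%:P * (('X - b1%:P) * ('X - b2%:P) * ('X - b3%:P) * ('X - b4%:P)) ->
     let lam1 := Num.max (Fq a4 a3 a2 a1 b1) (Fq a4 a3 a2 a1 b3) in
     let lam2 := Num.min (Fq a4 a3 a2 a1 b2) (Fq a4 a3 a2 a1 b4) in
     let dagger := - lam2 <= a0 <= - lam1 in
     (all_roots_real_nonneg f <->
        [/\ all_roots_real_nonneg (deriv f), a0 <= 0 & dagger]) /\
     (all_roots_real_pos f <->
        [/\ all_roots_real_pos (deriv f), a0 < 0 & dagger])).

Proof.
move=> f A4 A3 A2 A1 fC'.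
have fC'E : fC' = 5%:P *
    (depressed_quartic (u2 A4 A3) (u3 A4 A3 A2) (u4 A4 A3 A2 A1) \Po ('X + (A4 / 5)%:P)).
  by rewrite /fC' -deriv_map map_quint deriv_quint_depressed.
have u3E : u3 A4 A3 A2 = (u3 a4 a3 a2)%:C%C := u3_fmorph (real_complex R) a4 a3 a2.
have shift (x : bool -> bool -> R[i]) :
    (\prod_(i1 : bool) \prod_(i2 : bool) ('X - (x i1 i2)%:P)) \Po ('X + (A4 / 5)%:P) =
    \prod_(i1 : bool) \prod_(i2 : bool) ('X - (x i1 i2 - A4 / 5)%:P).
  by rewrite rmorph_prod; apply: eq_bigr => i1 _; rewrite /= prod_XsubC_comp_XaddC.
split=> [u3_0 s t hs ht | ].
  by rewrite fC'E u3E u3_0 rmorph0 (depressed_quartic_biquadratic hs ht) shift.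
split=> [u3_neq0 s C w r hs hC hw hr | b1 b2 b3 b4 b43 b32 b21 f'E0 lam1 lam2 dagger].
  rewrite fC'E (depressed_quartic_ferrari _ (ferrari_resolvent_yres hs hC) hw hr) ?shift //.
  by rewrite u3E fmorph_eq0.
have f'E : f^`() = 5 *: \prod_(b <- [:: b4; b3; b2; b1]) ('X - b%:P).
  by rewrite f'E0 -mul_polyC !big_cons big_nil; ring.
have f0 : f.[0] = a0 by rewrite horner_quint /Fq; ring.
have daggerE : dagger <-> alternating_signs f b1 b2 b3 b4.
  rewrite /dagger /lam1 /lam2 /alternating_signs !horner_quint lerNl le_min lerNr ge_max.
  split=> [/andP[/andP[? ?] /andP[? ?]] | [? ? ? ?]]; first by split; lra.
  by apply/andP; split; apply/andP; split; lra.
have f_monic : f \is monic := quint_monic a4 a3 a2 a1 a0.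
rewrite (quintic_real_nonneg_rootsP b43 b32 b21 f_monic f'E).
rewrite (quintic_real_pos_rootsP b43 b32 b21 f_monic f'E) f0.
by split; split=> -[p'_roots a0_sign /daggerE signs].
Qed.
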